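(* Let $\Sigma,\Gamma$ be finite alphabets, each with at least two letters, and let $w \in \Sigma^*$. If there exist an injective morphism $h:\Sigma^*\to\Gamma^*$, a word $x\in\Gamma^*$ and a rational $r\ge 1$ such that $h(w) = x^r$ and $|x|_a = 1$ for some letter $a\in\Gamma$, then $\mathrm{E}_{\mathcal{I}}(w) = \infty$.
   Context: $|x|_a$ is the number of occurrences of the letter $a$ in $x$. For a nonempty word $v$ and integer $p\ge 0$, $v^{p/|v|}$ denotes the prefix of length $p$ of $vvv\cdots$. For a nonempty finite word $u$, $\mathrm{E}(u) = \sup\{ r \in \mathbb{Q} : u = v^r \text{ for some nonempty } v\}$. $\mathcal{I}$ is the set of injective morphisms $\Sigma^* \to \Gamma^*$ and $\mathrm{E}_{\mathcal{I}}(w) = \sup\{\mathrm{E}(h(w)) : h \in \mathcal{I}\}$. *)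

From mathcomp Require Import all_boot all_order all_algebra.
Set Implicit Arguments. Unset Strict Implicit. Unset Printing Implicit Defensive.
Import GRing.Theory Num.Theory.
Local Open Scope ring_scope.

Definition morph (S G : Type) (f : S -> seq G) (w : seq S) : seq G :=
  flatten (map f w).

(* v^{p/|v|}: the prefix of length p of v v v ... (for v nonempty). *)
Definition rpow (T : Type) (v : seq T) (p : nat) : seq T :=
  take p (flatten (nseq p v)).

Definition is_rpow (T : Type) (u v : seq T) (r : rat) : Prop :=
  (0 < size v)%N /\ r * (size v)%:R = (size u)%:R /\ u = rpow v (size u).

(* E_I(w) = infinity: the set of exponents E(h(w)), h injective morphism,
   is unbounded above. *)
Definition EI_infinite (S G : Type) (w : seq S) : Prop :=
  forall M : rat, exists (f : S -> seq G) (v : seq G) (r : rat),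
    injective (morph f) /\ is_rpow (morph f w) v r /\ M < r.

From mathcomp Require Import all_boot all_order all_algebra.
Import Order.TTheory GRing.Theory Num.Theory.

Set Implicit Arguments.
Unset Strict Implicit.
Unset Printing Implicit Defensive.

(* Write x = x1 a x2 with a occurring neither in x1 nor in x2.  The morphism
   that fixes every letter except a and sends a to a (x2 x1 a)^k is injective,
   since the image of each letter begins with that letter, and, because
   x1 a (x2 x1 a)^k = (x1 a x2)^k x1 a, it sends x1 a t to x^k x1 a t when a
   does not occur in t.  Hence it maps x to x^(k+1) and every prefix of x to a
   power of x followed by that prefix, so it maps x^r to x^r' with r' >= k+1
   as soon as r >= 1.  Composing h with it gives arbitrarily large exponents. *)

Section Powers.
Variable T : Type.
Implicit Types v y z : seq T.

Definition powseq v n := flatten (nseq n v).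

Lemma size_powseq v n : size (powseq v n) = n * size v.
Proof. by elim: n => //= n IH; rewrite size_cat IH mulSn. Qed.

Lemma powseqS v n : powseq v n.+1 = v ++ powseq v n.
Proof. by []. Qed.

Lemma powseqD v m n : powseq v (m + n) = powseq v m ++ powseq v n.
Proof. by rewrite /powseq nseqD flatten_cat. Qed.

Lemma powseqSr v n : powseq v n.+1 = powseq v n ++ v.
Proof. by rewrite -addn1 powseqD powseqS cats0. Qed.

Lemma powseqM v m n : powseq (powseq v n) m = powseq v (m * n).
Proof. by elim: m => // m IH; rewrite mulSn powseqD -IH. Qed.

Lemma cat_powseq_conj y z n : y ++ powseq (z ++ y) n = powseq (y ++ z) n ++ y.
Proof.
elim: n => [|n IH]; first by rewrite cats0.
by rewrite !powseqS -!catA IH.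
Qed.

Lemma take_powseq_leq v n N N' : n <= N * size v -> N <= N' ->
  take n (powseq v N') = take n (powseq v N).
Proof.
by move=> le_n_N /subnKC<-; rewrite powseqD takel_cat // size_powseq.
Qed.

Lemma rpowE v n N : 0 < size v -> n <= N * size v ->
  rpow v n = take n (powseq v N).
Proof.
move=> v_gt0 le_n_N; have le_n_n : n <= n * size v by rewrite leq_pmulr.
have [le_nN | lt_Nn] := leqP n N; rewrite /rpow -/(powseq v n).
  exact: esym (take_powseq_leq le_n_n le_nN).
exact: take_powseq_leq le_n_N (ltnW lt_Nn).
Qed.

Lemma size_rpow v n : 0 < size v -> size (rpow v n) = n.
Proof.
by move=> v_gt0; rewrite size_takel // size_powseq leq_pmulr.
Qed.

Lemma rpow_powseq_cat v q m : m < size v ->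
  rpow v (q * size v + m) = powseq v q ++ take m v.
Proof.
move=> lt_m_v; have v_gt0 : 0 < size v := leq_ltn_trans (leq0n m) lt_m_v.
rewrite (rpowE (N := q.+1)) //; last by rewrite mulSnr leq_add2l ltnW.
by rewrite powseqSr take_cat size_powseq ltnNge leq_addr /= addKn.
Qed.

Lemma rpow_divn v n : 0 < size v ->
  rpow v n = powseq v (n %/ size v) ++ take (n %% size v) v.
Proof. by move=> v_gt0; rewrite -rpow_powseq_cat ?ltn_mod -?divn_eq. Qed.

End Powers.

Section Morphisms.
Variables S G : Type.
Implicit Types (f : S -> seq G) (s t : seq S).

Lemma morph_cat f s t : morph f (s ++ t) = morph f s ++ morph f t.
Proof. by rewrite /morph map_cat flatten_cat. Qed.

Lemma morph_flatten f (ss : seq (seq S)) :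
  morph f (flatten ss) = flatten (map (morph f) ss).
Proof. by elim: ss => //= s ss IH; rewrite morph_cat IH. Qed.

Lemma morph_powseq f s n : morph f (powseq s n) = powseq (morph f s) n.
Proof. by rewrite morph_flatten map_nseq. Qed.

End Morphisms.

Lemma morph_comp (S G H : Type) (f : S -> seq G) (g : G -> seq H) s :
  morph g (morph f s) = morph (morph g \o f) s.
Proof. by rewrite [morph f s]/morph morph_flatten -map_comp. Qed.

Lemma morph_inj_head (T : Type) (f : T -> seq T) :
  (forall c, exists t, f c = c :: t) -> injective (morph f).
Proof.
move=> f_head; elim=> [|c1 s1 IH] [|c2 s2] //; rewrite /morph /=.
- by have [t ->] := f_head c2.
- by have [t ->] := f_head c1.
have [t1 e1] := f_head c1; have [t2 e2] := f_head c2.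
rewrite e1 e2 => -[c12]; subst c2; rewrite e1 in e2; case: e2 => <-.
by move/(congr1 (drop (size t1))); rewrite !drop_size_cat // => /IH ->.
Qed.

Section Expansion.
Variables (T : eqType) (a : T) (p : seq T).

Definition expand (c : T) : seq T := if c == a then a :: p else [:: c].

Lemma expand_inj : injective (morph expand).
Proof.
apply: morph_inj_head => c; rewrite /expand.
by case: eqP => [->|_]; eexists.
Qed.

Lemma morph_expand_notin s : a \notin s -> morph expand s = s.
Proof.
elim: s => //= c s IH; rewrite in_cons negb_or => /andP[ca /IH].
by rewrite /morph /= /expand eq_sym (negbTE ca) => ->.
Qed.

End Expansion.

Lemma count_mem1_pivot (T : eqType) (a : T) (x : seq T) : count_mem a x = 1 ->
  exists x1 x2, [/\ x = x1 ++ a :: x2, a \notin x1 & a \notin x2].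
Proof.
move=> ax1; have ax : a \in x by rewrite -has_pred1 has_count ax1.
move: ax1; case/splitPr: ax => x1 x2.
rewrite count_cat /= eqxx addnCA add1n => -[].
move/eqP; rewrite addn_eq0 => /andP[/eqP/count_memPn a_x1 /eqP/count_memPn a_x2].
by exists x1, x2.
Qed.

Section Pumping.
Variables (T : eqType) (a : T) (x1 x2 : seq T) (k : nat).
Hypotheses (a_x1 : a \notin x1) (a_x2 : a \notin x2).

Let x := x1 ++ a :: x2.
Let pump := expand a (powseq (x2 ++ x1 ++ [:: a]) k).

Lemma morph_pump_pivot t : a \notin t ->
  morph pump (x1 ++ a :: t) = powseq x k ++ x1 ++ a :: t.
Proof.
move=> a_t; rewrite morph_cat morph_expand_notin //.
have -> : morph pump (a :: t) = a :: powseq (x2 ++ x1 ++ [:: a]) k ++ t.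
  by rewrite /morph /= {1}/pump /expand eqxx -/(morph _ t) morph_expand_notin.
rewrite -cat1s catA [(x1 ++ _) ++ _]catA cat_powseq_conj.
by rewrite -!catA !cat1s.
Qed.

Lemma morph_pump_take j :
  morph pump (take j x) = powseq x (k * (a \in take j x)) ++ take j x.
Proof.
rewrite /x take_cat; case: ltnP => [_ | _].
  have a_take : a \notin take j x1 by apply: contra a_x1; apply: mem_take.
  by rewrite (negbTE a_take) muln0 morph_expand_notin.
case: (j - size x1) => [|j'] /=.
  by rewrite cats0 (negbTE a_x1) muln0 morph_expand_notin.
rewrite morph_pump_pivot ?mem_cat ?mem_head ?orbT ?muln1 //.
by apply: contra a_x2; apply: mem_take.
Qed.

Lemma morph_pump_rpow n : exists2 n',
  morph pump (rpow x n) = rpow x n' & k.+1 * (n %/ size x) * size x <= n'.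
Proof.
have x_gt0 : 0 < size x by rewrite size_cat addnS.
have pump_x : morph pump x = powseq x k.+1.
  rewrite -{1}(take_size x) morph_pump_take take_size mem_cat mem_head orbT.
  by rewrite muln1 powseqSr.
rewrite rpow_divn // morph_cat morph_powseq pump_x powseqM morph_pump_take.
rewrite catA -powseqD -rpow_powseq_cat ?ltn_mod //.
by eexists; rewrite // mulnDl (mulnC k.+1) -addnA leq_addr.
Qed.

End Pumping.

Lemma pump_rpow (T : eqType) (a : T) (x : seq T) n k :
  count_mem a x = 1 -> size x <= n ->
  exists2 g : T -> seq T, injective (morph g) &
    exists2 n', morph g (rpow x n) = rpow x n' & k.+1 * size x <= n'.
Proof.
move=> /count_mem1_pivot[x1 [x2 [-> a_x1 a_x2]]] le_x_n.
have [n' pump_x_n le_n'] := morph_pump_rpow k a_x1 a_x2 n.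
exists (expand a (powseq (x2 ++ x1 ++ [:: a]) k)); first exact: expand_inj.
exists n' => //; apply: leq_trans le_n'.
by rewrite mulnAC leq_pmulr // divn_gt0 // size_cat addnS.
Qed.

Local Open Scope ring_scope.

Lemma is_rpow_rpow (T : Type) (v : seq T) n :
  (0 < size v)%N -> is_rpow (rpow v n) v (n%:R / (size v)%:R).
Proof.
move=> v_gt0; rewrite /is_rpow size_rpow //.
by rewrite divfK // pnatr_eq0 -lt0n.
Qed.

Lemma is_rpow_size_leq (T : Type) (u v : seq T) r :
  is_rpow u v r -> 1 <= r -> (size v <= size u)%N.
Proof.
case=> _ [r_v _] r_ge1; rewrite -(ler_nat rat) -r_v.
by rewrite ler_peMl // ler0n.
Qed.

Theorem lemma7 (S G : finType) (w : seq S) :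
  (1 < #|S|)%N -> (1 < #|G|)%N ->
  (exists (f : S -> seq G) (x : seq G) (r : rat) (a : G),
      [/\ injective (morph f), 1 <= r, is_rpow (morph f w) x r
        & count_mem a x = 1%N]) ->
  EI_infinite G w.
Proof.
move=> _ _ [f [x [r [a [f_inj r_ge1 xr ax1]]]]] M.
have [k M_lt_k] : exists k : nat, M < k%:R.
  exists (Num.bound `|M|).
  exact: le_lt_trans (ler_norm M) (archi_boundP (normr_ge0 M)).
have [x_gt0 [_ fw_eq]] := xr.
have [g g_inj [n' g_fw le_n']] := pump_rpow k ax1 (is_rpow_size_leq xr r_ge1).
exists (morph g \o f), x, (n'%:R / (size x)%:R); split; [|split].
- by move=> s t; rewrite -!morph_comp => /g_inj /f_inj.
- by rewrite -morph_comp fw_eq g_fw; apply: is_rpow_rpow.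
rewrite (lt_le_trans M_lt_k) // ler_pdivlMr ?ltr0n // -natrM ler_nat.
by rewrite (leq_trans _ le_n') // leq_mul2r leqnSn orbT.
Qed.
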